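(* For every real number $\nu>0$, the set $\mathbb{L}^{(\nu)}$ of $\nu$-Liouville numbers is uncountable.
   Context: A real number $\xi$ is a Liouville number if there exist a sequence of rational numbers $p_k/q_k$ ($p_k,q_k$ integers, $q_k>1$) and a sequence of positive reals $(\omega_k)_k$ with $\omega_k\to\infty$ such that $0<|\xi-p_k/q_k|<q_k^{-\omega_k}$ for all $k$. For a real number $\xi$, let $S(\xi)$ be the set of real numbers $\nu^*\ge 0$ for which there exist a sequence of rationals $p_k/q_k$ (integers $q_k>1$) and a sequence of positive reals $(\omega_k)_k$ such that $0<|\xi-p_k/q_k|<q_k^{-\omega_k}$ for all $k$ and $\omega_k/q_k^{\nu^*}\to\infty$ as $k\to\infty$. For $\nu\in[0,\infty]$, $\xi$ is called a $\nu$-Liouville number if $\xi$ is a Liouville number and $\sup S(\xi)=\nu$; the set of $\nu$-Liouville numbers is denoted $\mathbb{L}^{(\nu)}$. In particular, $\xi$ is an $\infty$-Liouville number iff $S(\xi)=[0,\infty)$. *)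

From Stdlib Require Import Reals ZArith.
Open Scope R_scope.

Definition tends_to_infty (u : nat -> R) : Prop :=
  forall M : R, exists N : nat, forall k : nat, (N <= k)%nat -> M < u k.

Definition approx_seq (xi : R) (p q : nat -> Z) (omega : nat -> R) : Prop :=
  (forall k, (1 < q k)%Z) /\ (forall k, 0 < omega k) /\
  (forall k, 0 < Rabs (xi - IZR (p k) / IZR (q k)) /\
             Rabs (xi - IZR (p k) / IZR (q k)) < Rpower (IZR (q k)) (- omega k)).

Definition liouville (xi : R) : Prop :=
  exists (p q : nat -> Z) (omega : nat -> R),
    approx_seq xi p q omega /\ tends_to_infty omega.

Definition in_S (xi : R) (nu_star : R) : Prop :=
  0 <= nu_star /\
  exists (p q : nat -> Z) (omega : nat -> R),
    approx_seq xi p q omega /\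
    tends_to_infty (fun k => omega k / Rpower (IZR (q k)) nu_star).

Definition nu_liouville (nu : R) (xi : R) : Prop :=
  liouville xi /\ is_lub (in_S xi) nu.

Definition countable_set (A : R -> Prop) : Prop :=
  exists f : nat -> R, forall x, A x -> exists n, f n = x.

(* Digits b_k in {1,3} give xi_b = sum_k b_k / Q_k, where Q_0 = 2 and
   Q_(k+1) = Q_k ^ e_k with e_k about Q_k^nu.  The partial sums P_k / Q_k are
   in lowest terms (P_k odd, Q_k a power of 2) and approximate xi_b to within
   Q_k^-(e_k - 3), so every nu' < nu lies in S(xi_b).  Conversely, given p/q,
   the squaring growth of Q provides an m with Q_m <= 144 q^2 and
   Q_(m+1) > 12 q Q_m.  If p/q = P_m / Q_m then Q_m <= q and the order of
   approximation is below e_m <= q^nu + 5; otherwise p/q is at least 1/(q Q_m)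
   away from P_m / Q_m, hence at least q^-12 away from xi_b.  So no nu' > nu lies in
   S(xi_b).  Distinct digit sequences give distinct xi_b, and Cantor's diagonal
   argument finishes the proof. *)

From Stdlib Require Import Reals ZArith Znumtheory Lra Lia ClassicalEpsilon.
Open Scope R_scope.

Lemma Rpower_lt_reg (x a c : R) : 1 < x -> Rpower x a < Rpower x c -> a < c.
Proof.
  intros Hx Hlt. destruct (Rlt_or_le a c) as [Hac|Hca]; [exact Hac|].
  pose proof (Rle_Rpower x c a ltac:(lra) Hca). lra.
Qed.

Lemma Rpower_minus (x a c : R) : Rpower x (a - c) = Rpower x a / Rpower x c.
Proof. unfold Rminus, Rdiv. rewrite Rpower_plus, Rpower_Ropp. reflexivity. Qed.

Lemma tends_to_infty_Rpower (u : nat -> R) (d : R) :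
  0 < d -> tends_to_infty u -> tends_to_infty (fun k => Rpower (u k) d).
Proof.
  intros Hd Hu M. destruct (Hu (exp (M / d))) as [N HN]. exists N. intros k Hk.
  specialize (HN k Hk). pose proof (exp_pos (M / d)).
  assert (Hln : M / d < ln (u k)).
  { rewrite <- (ln_exp (M / d)). apply ln_increasing; lra. }
  assert (HM : M < d * ln (u k)).
  { apply (Rmult_lt_compat_l d) in Hln; [|exact Hd].
    replace (d * (M / d)) with M in Hln by (field; lra). exact Hln. }
  pose proof (exp_ineq1_le (d * ln (u k))). unfold Rpower. lra.
Qed.

Lemma Un_cv_le_eventually (u : nat -> R) (l c : R) (n : nat) :
  Un_cv u l -> (forall m, (n <= m)%nat -> u m <= c) -> l <= c.
Proof.
  intros Hu Hc. destruct (Rle_or_lt l c) as [|Hlt]; [assumption|].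
  destruct (Hu (l - c)) as [N HN]; [lra|].
  specialize (HN (max N n) (Nat.le_max_l _ _)).
  specialize (Hc (max N n) (Nat.le_max_r _ _)).
  unfold Rdist in HN. apply Rabs_def2 in HN. lra.
Qed.

Lemma Rabs_frac_sub_ge (p q p' q' : Z) :
  (0 < q)%Z -> (0 < q')%Z -> (p * q' <> p' * q)%Z ->
  1 / (IZR q * IZR q') <= Rabs (IZR p / IZR q - IZR p' / IZR q').
Proof.
  intros Hq Hq' Hne.
  assert (Hqr : 0 < IZR q) by (apply IZR_lt; exact Hq).
  assert (Hqr' : 0 < IZR q') by (apply IZR_lt; exact Hq').
  assert (Hnum : 1 <= Rabs (IZR (p * q' - p' * q))).
  { rewrite Rabs_Zabs. apply IZR_le. lia. }
  replace (IZR p / IZR q - IZR p' / IZR q')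
    with (IZR (p * q' - p' * q) * / (IZR q * IZR q'))
    by (rewrite minus_IZR, !mult_IZR; field; lra).
  rewrite Rabs_mult, Rabs_inv, (Rabs_pos_eq (IZR q * IZR q')) by nra.
  unfold Rdiv. apply Rmult_le_compat_r; [|exact Hnum].
  apply Rlt_le, Rinv_0_lt_compat. nra.
Qed.

(* If Q grows at least quadratically, some Q m <= c^2 is followed by a jump
   Q (S m) > c Q m: otherwise Q (S n) <= c Q n and Q n ^ 2 <= Q (S n) would
   keep every term below c^2. *)
Lemma sq_growth_gap (Q : nat -> R) (c : R) :
  (forall n, 0 < Q n) -> (forall n, Q n * Q n <= Q (S n)) -> tends_to_infty Q ->
  Q O <= c * c -> exists m, Q m <= c * c /\ c * Q m < Q (S m).
Proof.
  intros Hpos Hsq Hinf H0.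
  assert (Hind : forall n, Q n <= c * c \/ exists m, Q m <= c * c /\ c * Q m < Q (S m)).
  { induction n as [|n [Hn|Hgap]]; [left; exact H0| |right; exact Hgap].
    destruct (Rlt_or_le (c * Q n) (Q (S n))) as [Hlt|Hle].
    - right. exists n. split; assumption.
    - left. pose proof (Hpos n). pose proof (Hpos (S n)). pose proof (Hsq n).
      assert (Q (S n) * Q (S n) <= c * c * (Q n * Q n)) by nra.
      nra. }
  destruct (Hinf (c * c)) as [N HN].
  destruct (Hind N) as [HQ|Hgap]; [|exact Hgap].
  specialize (HN N (Nat.le_refl N)). lra.
Qed.

Lemma in_S_le (xi nu nu' C : R) : 0 <= C ->
  (forall (p q : Z) (w : R), (1 < q)%Z ->
     Rabs (xi - IZR p / IZR q) < Rpower (IZR q) (- w) -> w < Rpower (IZR q) nu + C) ->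
  in_S xi nu' -> nu' <= nu.
Proof.
  intros HC Hbound [Hnu0 [p [q [w [[Hq [_ Happ]] Hinf]]]]].
  destruct (Rle_or_lt nu' nu) as [|Hlt]; [assumption|exfalso].
  destruct (Hinf (1 + C)) as [N HN]. specialize (HN N (Nat.le_refl N)). cbv beta in HN.
  destruct (Happ N) as [_ HappN].
  pose proof (Hbound _ _ _ (Hq N) HappN) as Hw.
  assert (Hr : 1 < IZR (q N)) by (apply IZR_lt, Hq).
  set (r := IZR (q N)) in *.
  assert (Hle : Rpower r nu <= Rpower r nu') by (apply Rle_Rpower; lra).
  assert (H1 : 1 <= Rpower r nu')
    by (rewrite <- (Rpower_O r) by lra; apply Rle_Rpower; lra).
  apply (Rmult_lt_compat_r (Rpower r nu')) in HN; [|lra].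
  unfold Rdiv in HN. rewrite Rmult_assoc, Rinv_l, Rmult_1_r in HN by lra.
  assert (C <= C * Rpower r nu')
    by (rewrite <- (Rmult_1_r C) at 1; apply Rmult_le_compat_l; lra).
  lra.
Qed.

Lemma in_S_of_approx (xi nu nu' : R) (p q : nat -> Z) (w : nat -> R) :
  approx_seq xi p q w -> (forall k, Rpower (IZR (q k)) nu <= w k) ->
  tends_to_infty (fun k => IZR (q k)) -> 0 <= nu' < nu -> in_S xi nu'.
Proof.
  intros Happ Hw Hq [H0 Hlt]. split; [exact H0|]. exists p, q, w. split; [exact Happ|].
  intro M. destruct (tends_to_infty_Rpower _ (nu - nu') ltac:(lra) Hq M) as [N HN].
  exists N. intros k Hk. specialize (HN k Hk). cbv beta in HN.
  rewrite Rpower_minus in HN.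
  apply (Rlt_le_trans _ _ _ HN). apply Rmult_le_compat_r; [|apply Hw].
  apply Rlt_le, Rinv_0_lt_compat, exp_pos.
Qed.

Lemma liouville_of_in_S_0 (xi : R) : in_S xi 0 -> liouville xi.
Proof.
  intros [_ [p [q [w [Happ Hinf]]]]]. exists p, q, w. split; [exact Happ|].
  intro M. destruct (Hinf M) as [N HN]. exists N. intros k Hk. specialize (HN k Hk).
  destruct Happ as [Hq _]. specialize (Hq k).
  rewrite Rpower_O, Rdiv_1_r in HN by (apply IZR_lt; lia). exact HN.
Qed.

Lemma is_lub_of_interval (A : R -> Prop) (nu : R) : 0 < nu ->
  (forall x, A x -> x <= nu) -> (forall x, 0 <= x < nu -> A x) -> is_lub A nu.
Proof.
  intros Hnu Hub Hbelow. split; [exact Hub|].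
  intros c Hc. destruct (Rle_or_lt nu c) as [|Hlt]; [assumption|exfalso].
  pose proof (Rmax_l c 0). pose proof (Rmax_r c 0).
  assert (Hmax : Rmax c 0 < nu) by (apply Rmax_lub_lt; lra).
  assert (Hy : 0 <= (Rmax c 0 + nu) / 2 < nu) by lra.
  pose proof (Hc _ (Hbelow _ Hy)). lra.
Qed.

Lemma cantor_not_countable (A : R -> Prop) (g : (nat -> bool) -> R) :
  (forall b, A (g b)) -> (forall b b', g b = g b' -> forall m, b m = b' m) ->
  ~ countable_set A.
Proof.
  intros HA Hinj [f Hf].
  set (d := fun m =>
    if excluded_middle_informative (exists b, g b = f m /\ b m = true) then false else true).
  destruct (Hf (g d) (HA d)) as [n Hn].
  destruct (excluded_middle_informative (exists b, g b = f n /\ b n = true))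
    as [[b [Hb Hbn]]|Hno] eqn:Ed.
  - assert (Hdn : d n = false) by (unfold d; rewrite Ed; reflexivity).
    pose proof (Hinj b d ltac:(congruence) n). congruence.
  - apply Hno. exists d. split; [symmetry; exact Hn|]. unfold d. rewrite Ed. reflexivity.
Qed.

Section Construction.

Variable nu : R.

Definition exponent (q : Z) : nat := (Z.to_nat (up (Rpower (IZR q) nu)) + 4)%nat.

Fixpoint denom (n : nat) : Z :=
  match n with
  | O => 2%Z
  | S n => (denom n ^ Z.of_nat (exponent (denom n)))%Z
  end.

Definition quality (k : nat) : R := INR (exponent (denom k)) - 3.

Lemma exponent_bounds (q : Z) :
  Rpower (IZR q) nu + 4 < INR (exponent q) <= Rpower (IZR q) nu + 5.
Proof.
  unfold exponent. rewrite plus_INR. destruct (archimed (Rpower (IZR q) nu)) as [H1 H2].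
  assert (Hpos : 0 < Rpower (IZR q) nu) by apply exp_pos.
  assert (Hu : (0 < up (Rpower (IZR q) nu))%Z) by (apply lt_IZR; lra).
  rewrite INR_IZR_INZ, Z2Nat.id by lia. simpl. lra.
Qed.

Lemma exponent_ge4 (q : Z) : (4 <= exponent q)%nat.
Proof. unfold exponent. lia. Qed.

Lemma denom_pow2 (n : nat) : exists k, (0 < k)%Z /\ denom n = (2 ^ k)%Z.
Proof.
  induction n as [|n [k [Hk E]]]; simpl.
  - exists 1%Z. split; [lia|reflexivity].
  - rewrite E, <- Z.pow_mul_r by lia. exists (k * Z.of_nat (exponent (2 ^ k)))%Z.
    pose proof (exponent_ge4 (2 ^ k)). split; [nia|reflexivity].
Qed.

Lemma denom_ge2 (n : nat) : (2 <= denom n)%Z.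
Proof.
  destruct (denom_pow2 n) as [k [Hk ->]].
  replace 2%Z with (2 ^ 1)%Z at 1 by reflexivity. apply Z.pow_le_mono_r; lia.
Qed.

Lemma IZR_denom_ge2 (n : nat) : 2 <= IZR (denom n).
Proof. apply IZR_le, denom_ge2. Qed.

Lemma IZR_denom_S (n : nat) : IZR (denom (S n)) = IZR (denom n) ^ exponent (denom n).
Proof. simpl. rewrite pow_IZR. reflexivity. Qed.

Lemma denom_growth (n : nat) :
  4 * (IZR (denom n) * IZR (denom n)) <= IZR (denom (S n)).
Proof.
  rewrite IZR_denom_S. pose proof (IZR_denom_ge2 n) as HQ.
  set (Q := IZR (denom n)) in *.
  apply Rle_trans with (Q ^ 4).
  - assert (4 <= Q * Q) by nra.
    replace (Q ^ 4) with (Q * Q * (Q * Q)) by ring. nra.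
  - apply Rle_pow; [lra|apply exponent_ge4].
Qed.

Lemma denom_sq_le (n : nat) : IZR (denom n) * IZR (denom n) <= IZR (denom (S n)).
Proof. pose proof (denom_growth n). pose proof (IZR_denom_ge2 n). nra. Qed.

Lemma denom_mul4_le (n : nat) : 4 * IZR (denom n) <= IZR (denom (S n)).
Proof. pose proof (denom_growth n). pose proof (IZR_denom_ge2 n). nra. Qed.

Lemma denom_tends_to_infty : tends_to_infty (fun k => IZR (denom k)).
Proof.
  assert (Hlin : forall k, INR k <= IZR (denom k)).
  { induction k as [|k IH].
    - pose proof (IZR_denom_ge2 0). simpl. lra.
    - rewrite S_INR. pose proof (denom_mul4_le k). pose proof (IZR_denom_ge2 k). lra. }
  intro M. destruct (INR_unbounded M) as [N HN]. exists N. intros k Hk.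
  apply le_INR in Hk. pose proof (Hlin k). lra.
Qed.

Lemma Rpower_neg_quality (k : nat) :
  Rpower (IZR (denom k)) (- quality k) = IZR (denom k) ^ 3 / IZR (denom (S k)).
Proof.
  pose proof (IZR_denom_ge2 k). unfold quality.
  replace (- (INR (exponent (denom k)) - 3)) with (INR 3 - INR (exponent (denom k)))
    by (simpl; lra).
  rewrite Rpower_minus, !Rpower_pow, IZR_denom_S by lra. reflexivity.
Qed.

Lemma quality_ge (k : nat) : Rpower (IZR (denom k)) nu + 1 <= quality k.
Proof. unfold quality. pose proof (exponent_bounds (denom k)). lra. Qed.

Section Expansion.

Variable b : nat -> bool.

Definition digit (k : nat) : Z := if b k then 3%Z else 1%Z.

Fixpoint numer (n : nat) : Z :=
  match n with
  | O => digit O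
  | S n => (numer n * denom n ^ (Z.of_nat (exponent (denom n)) - 1) + digit (S n))%Z
  end.

Definition partial_sum (n : nat) : R := IZR (numer n) / IZR (denom n).

Lemma digit_bounds (k : nat) : 1 <= IZR (digit k) <= 3.
Proof. unfold digit. destruct (b k); split; apply IZR_le; lia. Qed.

Lemma partial_sum_S (n : nat) :
  partial_sum (S n) = partial_sum n + IZR (digit (S n)) / IZR (denom (S n)).
Proof.
  unfold partial_sum. pose proof (exponent_ge4 (denom n)).
  set (c := (denom n ^ (Z.of_nat (exponent (denom n)) - 1))%Z).
  assert (E : denom (S n) = (c * denom n)%Z).
  { unfold c. simpl. rewrite Z.mul_comm, <- Z.pow_succ_r by lia. f_equal. lia. }
  assert (Hc : IZR c <> 0).
  { apply not_0_IZR, Z.pow_nonzero; [pose proof (denom_ge2 n)|]; lia. }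
  pose proof (IZR_denom_ge2 n).
  simpl numer. fold c. rewrite E, plus_IZR, !mult_IZR. field. lra.
Qed.

Lemma partial_sum_growing : Un_growing partial_sum.
Proof.
  intro n. rewrite partial_sum_S.
  pose proof (digit_bounds (S n)). pose proof (IZR_denom_ge2 (S n)).
  assert (0 < IZR (digit (S n)) / IZR (denom (S n))) by (apply Rdiv_lt_0_compat; lra).
  lra.
Qed.

(* The digits are at most 3 and the denominators grow at least fourfold, so
   each step trades 6/Q_(k+1) for at most 3/Q_(k+1) + 6/Q_(k+2) <= 6/Q_(k+1). *)
Lemma partial_sum_tail (n j : nat) :
  partial_sum (n + j) + 6 / IZR (denom (S (n + j)))
  <= partial_sum n + 6 / IZR (denom (S n)).
Proof.
  induction j as [|j IH]; [rewrite Nat.add_0_r; lra|].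
  replace (n + S j)%nat with (S (n + j)) by lia.
  rewrite partial_sum_S. pose proof (digit_bounds (S (n + j))).
  pose proof (denom_mul4_le (S (n + j))). pose proof (IZR_denom_ge2 (S (n + j))).
  set (x := IZR (denom (S (n + j)))) in *.
  set (y := IZR (denom (S (S (n + j))))) in *.
  set (e := IZR (digit (S (n + j)))) in *.
  assert (e / x <= 3 / x)
    by (apply Rmult_le_compat_r; [apply Rlt_le, Rinv_0_lt_compat|]; lra).
  assert (6 / y <= 3 / x)
    by (apply (Rmult_le_reg_r (x * y)); [nra|field_simplify; lra]).
  lra.
Qed.

Lemma partial_sum_le (n m : nat) :
  (n <= m)%nat -> partial_sum m <= partial_sum n + 6 / IZR (denom (S n)).
Proof.
  intro Hnm. replace m with (n + (m - n))%nat by lia.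
  pose proof (partial_sum_tail n (m - n)). pose proof (IZR_denom_ge2 (S (n + (m - n)))).
  assert (0 < 6 / IZR (denom (S (n + (m - n))))) by (apply Rdiv_lt_0_compat; lra).
  lra.
Qed.

Lemma partial_sum_has_ub : has_ub partial_sum.
Proof.
  exists (partial_sum 0 + 6 / IZR (denom 1)). intros x [m ->]. apply partial_sum_le. lia.
Qed.

Definition xi : R :=
  proj1_sig (growing_cv partial_sum partial_sum_growing partial_sum_has_ub).

Lemma xi_bounds (n : nat) :
  partial_sum n + 1 / IZR (denom (S n)) <= xi <= partial_sum n + 6 / IZR (denom (S n)).
Proof.
  unfold xi. destruct (growing_cv _ _ _) as [l Hl]. cbn [proj1_sig]. split.
  - pose proof (growing_ineq _ _ partial_sum_growing Hl (S n)) as Hle.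
    rewrite partial_sum_S in Hle.
    pose proof (digit_bounds (S n)). pose proof (IZR_denom_ge2 (S n)).
    assert (1 / IZR (denom (S n)) <= IZR (digit (S n)) / IZR (denom (S n)))
      by (apply Rmult_le_compat_r; [apply Rlt_le, Rinv_0_lt_compat|]; lra).
    lra.
  - apply (Un_cv_le_eventually _ _ _ n Hl). intros m Hm. apply partial_sum_le, Hm.
Qed.

Lemma approx_seq_xi : approx_seq xi numer denom quality.
Proof.
  split; [|split].
  - intro k. pose proof (denom_ge2 k). lia.
  - intro k. pose proof (quality_ge k). pose proof (exp_pos (nu * ln (IZR (denom k)))).
    unfold Rpower in *. lra.
  - intro k. fold (partial_sum k). destruct (xi_bounds k) as [L U].
    pose proof (IZR_denom_ge2 (S k)). pose proof (IZR_denom_ge2 k).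
    assert (0 < 1 / IZR (denom (S k))) by (apply Rdiv_lt_0_compat; lra).
    rewrite Rabs_pos_eq by lra. split; [lra|].
    rewrite Rpower_neg_quality.
    assert (6 / IZR (denom (S k)) < IZR (denom k) ^ 3 / IZR (denom (S k)))
      by (apply Rmult_lt_compat_r; [apply Rinv_0_lt_compat|simpl]; nra).
    lra.
Qed.

Lemma in_S_xi_below (nu' : R) : 0 <= nu' < nu -> in_S xi nu'.
Proof.
  apply (in_S_of_approx _ _ _ _ _ _ approx_seq_xi); [|exact denom_tends_to_infty].
  intro k. pose proof (quality_ge k). lra.
Qed.

Lemma numer_odd (n : nat) : Z.odd (numer n) = true.
Proof.
  induction n as [|n IH]; simpl numer.
  - unfold digit. destruct (b O); reflexivity.
  - rewrite Z.odd_add, Z.odd_mul, IH.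
    destruct (denom_pow2 n) as [k [Hk E]]. pose proof (exponent_ge4 (denom n)).
    rewrite Z.odd_pow, E, Z.odd_pow by lia.
    unfold digit. destruct (b (S n)); reflexivity.
Qed.

(* numer n / denom n is in lowest terms: an odd numerator over a power of 2. *)
Lemma denom_le_of_eq_frac (n : nat) (p q : Z) :
  (0 < q)%Z -> (p * denom n = numer n * q)%Z -> (denom n <= q)%Z.
Proof.
  intros Hq E. apply Z.divide_pos_le; [exact Hq|].
  apply Gauss with (numer n); [exists p; lia|].
  destruct (denom_pow2 n) as [k [Hk ->]].
  apply rel_prime_sym, Zpow_facts.rel_prime_Zpower_r; [lia|].
  apply rel_prime_sym, prime_rel_prime; [exact prime_2|].
  intros [c Hc]. pose proof (numer_odd n) as Hodd.
  rewrite Hc, Z.odd_mul, Bool.andb_false_r in Hodd. discriminate.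
Qed.

Lemma quality_bound_eq_frac (n : nat) (p q : Z) (w : R) : 0 <= nu -> (1 < q)%Z ->
  (p * denom n = numer n * q)%Z ->
  Rabs (xi - IZR p / IZR q) < Rpower (IZR q) (- w) -> w < Rpower (IZR q) nu + 5.
Proof.
  intros Hnu Hq E Happ.
  pose proof (denom_le_of_eq_frac n p q ltac:(lia) E) as Hle. apply IZR_le in Hle.
  assert (Hqr : 2 <= IZR q) by (apply IZR_le; lia).
  pose proof (IZR_denom_ge2 n) as HQ.
  assert (Hfrac : IZR p / IZR q = partial_sum n).
  { unfold partial_sum. apply (f_equal IZR) in E. rewrite !mult_IZR in E.
    field_simplify_eq; lra. }
  rewrite Hfrac in Happ. destruct (xi_bounds n) as [L _].
  pose proof (IZR_denom_ge2 (S n)).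
  assert (0 < 1 / IZR (denom (S n))) by (apply Rdiv_lt_0_compat; lra).
  set (e := exponent (denom n)).
  assert (Hpow : Rpower (IZR q) (- INR e) <= 1 / IZR (denom (S n))).
  { rewrite Rpower_Ropp, Rpower_pow, IZR_denom_S by lra. fold e. unfold Rdiv.
    rewrite Rmult_1_l. apply Rinv_le_contravar; [apply pow_lt; lra|].
    apply pow_incr. lra. }
  assert (- INR e < - w).
  { apply (Rpower_lt_reg (IZR q)); [lra|].
    rewrite Rabs_pos_eq in Happ by lra. lra. }
  pose proof (exponent_bounds (denom n)).
  pose proof (Rle_Rpower_l (IZR (denom n)) (IZR q) nu Hnu ltac:(lra)).
  unfold e in *. lra.
Qed.

Lemma quality_bound_ne_frac (n : nat) (p q : Z) (w : R) : (1 < q)%Z ->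
  IZR (denom n) <= 12 * IZR q * (12 * IZR q) ->
  12 * IZR q * IZR (denom n) < IZR (denom (S n)) ->
  (p * denom n <> numer n * q)%Z ->
  Rabs (xi - IZR p / IZR q) < Rpower (IZR q) (- w) -> w < 12.
Proof.
  intros Hq Hsmall Hjump Hne Happ.
  assert (Hqr : 2 <= IZR q) by (apply IZR_le; lia).
  pose proof (IZR_denom_ge2 n) as HQ. pose proof (IZR_denom_ge2 (S n)) as HQ'.
  pose proof (Rabs_frac_sub_ge p q (numer n) (denom n) ltac:(lia)
    ltac:(pose proof (denom_ge2 n); lia) Hne) as Hsep.
  fold (partial_sum n) in Hsep. destruct (xi_bounds n) as [L U].
  set (x := xi) in *. set (Q := IZR (denom n)) in *.
  set (Q' := IZR (denom (S n))) in *. set (r := IZR q) in *.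
  assert (Hclose : Rabs (x - partial_sum n) <= 1 / (2 * r * Q)).
  { assert (6 / Q' <= 1 / (2 * r * Q)).
    { replace (1 / (2 * r * Q)) with (6 / (12 * r * Q)) by (field; lra).
      unfold Rdiv. apply Rmult_le_compat_l; [lra|].
      apply Rinv_le_contravar; [nra|lra]. }
    assert (0 < 1 / Q') by (apply Rdiv_lt_0_compat; lra).
    rewrite Rabs_pos_eq; lra. }
  assert (Hfar : 1 / (2 * r * Q) <= Rabs (x - IZR p / r)).
  { pose proof (Rabs_triang (IZR p / r - x) (x - partial_sum n)) as T.
    replace (IZR p / r - x + (x - partial_sum n)) with (IZR p / r - partial_sum n) in T
      by ring.
    rewrite (Rabs_minus_sym (IZR p / r) x) in T.
    assert (1 / (r * Q) = 2 * (1 / (2 * r * Q))) by (field; lra).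
    lra. }
  assert (Hpow : Rpower r (- 12) <= 1 / (2 * r * Q)).
  { replace (- 12) with (- INR 12) by (simpl; lra).
    rewrite Rpower_Ropp, Rpower_pow by lra. unfold Rdiv. rewrite Rmult_1_l.
    apply Rinv_le_contravar; [nra|].
    assert (512 <= r ^ 9) by (replace 512 with (2 ^ 9) by (simpl; lra); apply pow_incr; lra).
    assert (0 < r ^ 3) by (apply pow_lt; lra).
    replace (r ^ 12) with (r ^ 9 * r ^ 3) by ring.
    assert (2 * r * Q <= 288 * r ^ 3) by (simpl; nra).
    nra. }
  assert (- 12 < - w) by (apply (Rpower_lt_reg r); lra).
  lra.
Qed.

Lemma quality_bound (p q : Z) (w : R) : 0 <= nu -> (1 < q)%Z ->
  Rabs (xi - IZR p / IZR q) < Rpower (IZR q) (- w) -> w < Rpower (IZR q) nu + 12.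
Proof.
  intros Hnu Hq Happ.
  assert (Hqr : 2 <= IZR q) by (apply IZR_le; lia).
  pose proof (exp_pos (nu * ln (IZR q))).
  destruct (sq_growth_gap (fun k => IZR (denom k)) (12 * IZR q))
    as [m [Hsmall Hjump]].
  - intro k. pose proof (IZR_denom_ge2 k). lra.
  - exact denom_sq_le.
  - exact denom_tends_to_infty.
  - simpl. nra.
  - destruct (Z.eq_dec (p * denom m) (numer m * q)) as [E|E].
    + pose proof (quality_bound_eq_frac m p q w Hnu Hq E Happ). lra.
    + pose proof (quality_bound_ne_frac m p q w Hq Hsmall Hjump E Happ).
      unfold Rpower in *. lra.
Qed.

Lemma nu_liouville_xi : 0 < nu -> nu_liouville nu xi.
Proof.
  intro Hnu. split.
  - apply liouville_of_in_S_0, in_S_xi_below. lra.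
  - apply is_lub_of_interval; [exact Hnu| |exact in_S_xi_below].
    intros nu' Hnu'. apply (in_S_le xi nu nu' 12); [lra| |exact Hnu'].
    intros p q w. apply quality_bound. lra.
Qed.

End Expansion.

Lemma numer_ext (b b' : nat -> bool) (n : nat) :
  (forall k, (k <= n)%nat -> b k = b' k) -> numer b n = numer b' n.
Proof.
  induction n as [|n IH]; intro H; simpl; unfold digit.
  - rewrite (H O) by lia. reflexivity.
  - rewrite IH by (intros; apply H; lia). rewrite (H (S n)) by lia. reflexivity.
Qed.

Lemma partial_sum_sub (b b' : nat -> bool) (m : nat) :
  (forall k, (k < m)%nat -> b k = b' k) ->
  partial_sum b m - partial_sum b' m = IZR (digit b m - digit b' m) / IZR (denom m).
Proof.
  intro H. pose proof (IZR_denom_ge2 m). rewrite minus_IZR. destruct m as [|m].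
  - unfold partial_sum. simpl. field; lra.
  - rewrite !partial_sum_S.
    replace (partial_sum b' m) with (partial_sum b m)
      by (unfold partial_sum; rewrite (numer_ext b b' m) by (intros; apply H; lia);
          reflexivity).
    field; lra.
Qed.

(* At the first differing digit the partial sums differ by 2/Q_m, while each
   limit lies within [1/Q_(m+1), 6/Q_(m+1)] above its partial sum. *)
Lemma xi_lt_of_first_diff (b b' : nat -> bool) (m : nat) :
  (forall k, (k < m)%nat -> b k = b' k) -> b m = true -> b' m = false -> xi b' < xi b.
Proof.
  intros H Hb Hb'. pose proof (partial_sum_sub b b' m H) as Hsub.
  unfold digit in Hsub. rewrite Hb, Hb' in Hsub. simpl in Hsub.
  destruct (xi_bounds b m) as [L _]. destruct (xi_bounds b' m) as [_ U].
  pose proof (IZR_denom_ge2 m). pose proof (denom_mul4_le m).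
  set (Q := IZR (denom m)) in *. set (Q' := IZR (denom (S m))) in *.
  assert (5 / Q' < 2 / Q) by (apply (Rmult_lt_reg_r (Q * Q')); [nra|field_simplify; lra]).
  assert (6 / Q' = 1 / Q' + 5 / Q') by (field; lra).
  lra.
Qed.

Lemma xi_inj (b b' : nat -> bool) : xi b = xi b' -> forall m, b m = b' m.
Proof.
  intro E.
  assert (Hpre : forall m k, (k < m)%nat -> b k = b' k).
  { induction m as [|m IH]; intros k Hk; [lia|].
    destruct (Nat.eq_dec k m) as [->|Hne]; [|apply IH; lia].
    destruct (b m) eqn:Hb, (b' m) eqn:Hb'; try reflexivity.
    - pose proof (xi_lt_of_first_diff b b' m IH Hb Hb'). lra.
    - assert (IH' : forall k, (k < m)%nat -> b' k = b k) by (intros; symmetry; auto).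
      pose proof (xi_lt_of_first_diff b' b m IH' Hb' Hb). lra. }
  intro m. apply (Hpre (S m)). lia.
Qed.

End Construction.

Theorem theorem1 (nu : R) (hnu : 0 < nu) : ~ countable_set (nu_liouville nu).
Proof.
  apply (cantor_not_countable _ (xi nu)).
  - intro b. exact (nu_liouville_xi nu b hnu).
  - exact (xi_inj nu).
Qed.
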